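(* Over the class of serial models (models in which every world has at least one $R$-successor): (1) the formula $[\ddagger^{\ast}(p\land q)](\lnot\Box p\land\lnot\Box q)$ is true at every world of every serial model; but (2) the formula $[\ddagger(p\land q)](\lnot\Box p\land\lnot\Box q)$ is not true at every world of every serial model. Here $p,q$ are distinct atoms.
   Context: Fix a countable non-empty set $\mathit{At}$ of atoms. Formulas are built from $\top$, atoms, $\lnot$, $\land$, $\Box$ and, for propositional $\pi$, operators $[\ddagger\pi]$ and $[\ddagger^{\ast}\pi]$. A model is $\mathcal{M}=\langle W,R,V\rangle$, $W\neq\varnothing$, $R\subseteq W\times W$, $V:\mathit{At}\to\mathcal{P}(W)$, standard Kripke semantics for $\Box$. A literal is an atom or its negation; a clause is a finite set $D$ of literals read as $\bigvee D$ ($\bigvee\varnothing:=\bot$), tautological if it contains $p$ and $\lnot p$ for some $p$. For propositional $\pi$, $\mathcal{C}(\pi)$ is the set of non-tautological clauses $D$ with $\models\pi\to\bigvee D$ and no $D'\subsetneq D$ with $\models\pi\to\bigvee D'$. For a model $\mathcal{M}$ and a finite family $(D_i)_{i\in I}$ of non-tautological clauses with $0\notin I$, $\mathcal{M}^{(D_i)_{i\in I}}_u=\langle W',R',V'\rangle$ has $W'=W\times(\{0\}\cup I)$, $(w,i)R'(v,j)$ iff $wRv$, $(w,0)\in V'(p)$ iff $w\in V(p)$, and for $i\in I$: $(w,i)\in V'(p)$ iff $\lnot p\in D_i$, or $\{p,\lnot p\}\cap D_i=\varnothing$ and $w\in V(p)$. Semantics: $\mathcal{M},w\models[\ddagger\pi]\varphi$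 iff for all $D_1\in\mathcal{C}(\pi)$, $D_2\in\mathcal{C}(\lnot\pi)$, $\mathcal{M}^{(D_1,D_2)}_u,(w,0)\models\varphi$ (indexed by $I=\{1,2\}$). Strong forgetting whether: $\mathcal{M},w\models[\ddagger^{\ast}\pi]\varphi$ iff $\mathcal{M}^{\mathcal{C}(\pi)\cup\mathcal{C}(\lnot\pi)}_u,(w,0)\models\varphi$, where the family is the set $\mathcal{C}(\pi)\cup\mathcal{C}(\lnot\pi)$ indexed by itself (one new copy of $W$ per clause). *)

From mathcomp Require Import all_boot finmap.
Set Implicit Arguments.
Unset Strict Implicit.
Unset Printing Implicit Defensive.
Local Open Scope fset_scope.

Section Logic.
Variable At : countType.

Inductive pform : Type :=
| PTop : pform
| PAtom : At -> pform
| PNeg : pform -> pform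
| PAnd : pform -> pform -> pform.

Inductive form : Type :=
| FTop : form
| FAtom : At -> form
| FNeg : form -> form
| FAnd : form -> form -> form
| FBox : form -> form
| FForget : pform -> form -> form
| FSForget : pform -> form -> form.

Fixpoint peval (v : At -> bool) (pi : pform) : Prop :=
  match pi with
  | PTop => True
  | PAtom a => v a = true
  | PNeg pi' => ~ peval v pi'
  | PAnd pi1 pi2 => peval v pi1 /\ peval v pi2
  end.

(* Literals: (a, true) is the atom a, (a, false) is its negation. *)
Definition literal := (At * bool)%type.
(* Clauses: finite sets of literals, read disjunctively. *)
Definition clause := {fset literal}.

Definition clause_sat (v : At -> bool) (D : clause) : Prop :=
  exists2 l, l \in D & v l.1 = l.2.

Definition tautological (D : clause) : Prop :=
  exists a, (a, true) \in D /\ (a, false) \in D.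

Definition entails_clause (pi : pform) (D : clause) : Prop :=
  forall v : At -> bool, peval v pi -> clause_sat v D.

Definition Cl (pi : pform) (D : clause) : Prop :=
  ~ tautological D /\ entails_clause pi D /\
  ~ (exists D' : clause, D' `<` D /\ entails_clause pi D').

Record model : Type := Model {
  W : Type;
  W_inhab : inhabited W;
  R : W -> W -> Prop;
  V : At -> W -> Prop
}.

Definition serial (M : model) : Prop := forall w : W M, exists v, R w v.

(* The update M^{(D_i)_{i in I}}_u, with the copy 0 encoded as None and
   copy i in I encoded as Some i. *)
Definition update (M : model) (I : Type) (D : I -> clause) : model :=
  {| W := (W M * option I)%type;
     W_inhab := match W_inhab M with inhabits w => inhabits (w, None) end;
     R := fun x y => R x.1 y.1;
     V := fun a x => match x.2 with
                     | None => V a x.1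
                     | Some i => (a, false) \in D i \/
                                 ((a, true) \notin D i /\ (a, false) \notin D i
                                  /\ V a x.1)
                     end |}.

Fixpoint sat (phi : form) (M : model) (w : W M) {struct phi} : Prop :=
  match phi with
  | FTop => True
  | FAtom a => V a w
  | FNeg phi' => ~ sat phi' w
  | FAnd phi1 phi2 => sat phi1 w /\ sat phi2 w
  | FBox phi' => forall u : W M, R w u -> sat phi' u
  | FForget pi phi' =>
      forall D1 D2 : clause, Cl pi D1 -> Cl (PNeg pi) D2 ->
        sat phi' (M := update M (fun b : bool => if b then D1 else D2)) (w, None)
  | FSForget pi phi' =>
      sat phi' (M := update M (fun D : {D : clause | Cl pi D \/ Cl (PNeg pi) D} => proj1_sig D))
          (w, None)
  end.

End Logic.

(* The strong update adds one copy of the model per minimal clause of p /\ q,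
   among them {p} and {q}. In a copy built from the unit clause {p} the atom p
   is false everywhere, and by seriality such a copy of some successor is
   always accessible from (w, 0); likewise for q. The ordinary update adds
   only one copy per polarity: choosing {p} for p /\ q and {~p, ~q} for its
   negation, in the one-world reflexive model where every atom is true, q
   stays true in all three copies, so [] q holds at (w, 0). *)
From mathcomp Require Import all_boot finmap.
Set Implicit Arguments.
Unset Strict Implicit.
Unset Printing Implicit Defensive.
Local Open Scope fset_scope.

Section Clauses.
Variable At : countType.

Lemma clause_sat0 (v : At -> bool) : ~ clause_sat v fset0.
Proof. by case=> l; rewrite inE. Qed.

Lemma fproper_fset1 (T : choiceType) (A : {fset T}) (x : T) :
  A `<` [fset x] -> A = fset0.
Proof.
by rewrite fproperEneq fsubset1 => /andP[/negPf-> /eqP].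
Qed.

Lemma Cl_atom (pi : pform At) (a : At) (v0 : At -> bool) :
  peval v0 pi -> (forall v, peval v pi -> v a) -> Cl pi [fset (a, true)].
Proof.
move=> pi_v0 pi_a; split; [|split].
- by case=> b []; rewrite !inE => /eqP[->] /eqP.
- by move=> v /pi_a va; exists (a, true); rewrite ?inE.
- case=> D' [/fproper_fset1-> ent0].
  exact: clause_sat0 (ent0 _ pi_v0).
Qed.

Lemma Cl_neg_conj (p q : At) : p <> q ->
  Cl (PNeg (PAnd (PAtom p) (PAtom q))) [fset (p, false); (q, false)].
Proof.
move=> hpq; split; [|split].
- by case=> a []; rewrite !inE => /orP[] /eqP.
- move=> v /= npq; case vp: (v p); last by exists (p, false); rewrite ?inE ?eqxx.
  case vq: (v q); first by case: npq.
  by exists (q, false); rewrite ?inE ?eqxx ?orbT.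
- case=> D' []; rewrite fproperE => /andP[/fsubsetP subD' /fsubsetPn[x xD xD']].
  (* Falsify exactly the atom of the literal x missing from D'. *)
  have x_neg : x.2 = false by move: xD; rewrite !inE => /orP[] /eqP->.
  have npq : peval (fun b => b != x.1) (PNeg (PAnd (PAtom p) (PAtom q))).
    by move: xD; rewrite !inE => /orP[] /eqP-> /= []; rewrite eqxx.
  move=> /(_ _ npq)[l lD' /= vl].
  have l_neg : l.2 = false by move: (subD' _ lD'); rewrite !inE => /orP[] /eqP->.
  move: vl; rewrite l_neg => /negbFE /eqP lx.
  by move: lD' xD'; rewrite (surjective_pairing l) (surjective_pairing x) lx l_neg x_neg => ->.
Qed.

End Clauses.

Section Update.
Variables (At : countType) (M : model At) (I : Type) (D : I -> clause At).

Lemma update_atom_pos (a : At) (w : W M) (i : I) :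
  (a, true) \in D i -> ~ tautological (D i) ->
  ~ sat (FAtom a) ((w, Some i) : W (update M D)).
Proof.
move=> aD ntaut /= [naD | [] ]; last by rewrite aD.
by apply: ntaut; exists a.
Qed.

Lemma update_atom_keep (a : At) (w : W M) (i : I) :
  (a, true) \notin D i -> V a w -> sat (FAtom a) ((w, Some i) : W (update M D)).
Proof.
move=> naD Vaw /=.
by case: (boolP ((a, false) \in D i)) => [|nnaD]; [left | right].
Qed.

Lemma update_not_box_atom (a : At) (w : W M) (i : I) :
  serial M -> (a, true) \in D i -> ~ tautological (D i) ->
  ~ sat (FBox (FAtom a)) ((w, None) : W (update M D)).
Proof.
move=> /(_ w)[u wu] aD ntaut box_a.
exact: update_atom_pos aD ntaut (box_a (u, Some i) wu).
Qed.

End Update.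

Definition full_model (At : countType) : model At :=
  {| W := unit; W_inhab := inhabits tt; R := fun _ _ => True;
     V := fun _ _ => True |}.

Lemma full_model_serial (At : countType) : serial (full_model At).
Proof. by move=> w; exists tt. Qed.

Theorem proposition8 (At : countType) (p q : At) (hpq : p <> q) :
  (forall (M : model At), serial M -> forall w : W M,
     sat (FSForget (PAnd (PAtom p) (PAtom q))
                   (FAnd (FNeg (FBox (FAtom p))) (FNeg (FBox (FAtom q))))) w)
  /\
  ~ (forall (M : model At), serial M -> forall w : W M,
     sat (FForget (PAnd (PAtom p) (PAtom q))
                  (FAnd (FNeg (FBox (FAtom p))) (FNeg (FBox (FAtom q))))) w).
Proof.
have pq_true : peval (fun _ => true) (PAnd (PAtom p) (PAtom q)) by [].
have Cl_p := Cl_atom (a := p) pq_true (fun v => @proj1 _ _).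
have Cl_q := Cl_atom (a := q) pq_true (fun v => @proj2 _ _).
split.
- move=> M serM w; split.
  + exact: (update_not_box_atom (i := exist _ _ (or_introl Cl_p)) serM (fset11 _) Cl_p.1).
  + exact: (update_not_box_atom (i := exist _ _ (or_introl Cl_q)) serM (fset11 _) Cl_q.1).
- move=> /(_ _ (@full_model_serial At) tt _ _ Cl_p (Cl_neg_conj hpq)) [_]; apply.
  case=> [[] [i|]] _ //; apply: update_atom_keep => //.
  case: i; rewrite !inE //= !xpair_eqE ?andbF // andbT.
  by apply/eqP => /esym.
Qed.
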